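(* Let $A$ be a real $B\times N'$ matrix of rank $r\ge1$ with nonzero singular values $\sigma_1\ge\sigma_2\ge\dots\ge\sigma_r$, all lying in $(0,1]$, left singular vectors $\boldsymbol\xi_j\in\mathbb{R}^B$ and right singular vectors $\hat{\boldsymbol\xi}_j\in\mathbb{R}^{N'}$ (orthonormal, $A\hat{\boldsymbol\xi}_j=\sigma_j\boldsymbol\xi_j$, $A^T\boldsymbol\xi_j=\sigma_j\hat{\boldsymbol\xi}_j$). Let $\boldsymbol b=\sum_{j=1}^r b_j\boldsymbol\xi_j$ and $\boldsymbol b^\delta=\sum_{j=1}^r b^\delta_j\boldsymbol\xi_j$ lie in the range of $A$, let $\boldsymbol x=\sum_{j=1}^r \frac{b_j}{\sigma_j}\hat{\boldsymbol\xi}_j$ be the minimal-norm solution of $A\boldsymbol x=\boldsymbol b$, and for a filter function $\phi(s,\alpha)$ let $$\boldsymbol x^{\alpha,\delta}=\sum_{j=1}^r b_j^\delta\frac{\phi(\sigma_j,\alpha)}{\sigma_j}\hat{\boldsymbol\xi}_j.$$ Let $f:[0,\infty)\to(0,1]$ be continuous and strictly decreasing with $f(0)=1$, $f(j)=\sigma_j$ for $j=1,\dots,r$, and $f(t)\to0$ as $t\to\infty$, and assume that, for the fixed $\alpha>0$, the functions $t\mapsto|1-\phi(f(t),\alpha)|$ and $t\mapsto|\phi(f(t),\alpha)|/f(t)$ are nondecreasing on $[0,r+1]$. Then for every $p\in[1,\infty)$ there is a constant $C_1$, depending only on $p$ and on the matrix $A$ (through its dimensions and singular vectors), and not on $\alpha,\phi,\boldsymbol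 b,\boldsymbol b^\delta$, such that $$\|\boldsymbol x-\boldsymbol x^{\alpha,\delta}\|_p\le C_1\|\boldsymbol x\|_\infty\,\|1-\phi(f(\cdot),\alpha)\|_{L^p(0,r+1)}+C_1\|\boldsymbol b-\boldsymbol b^\delta\|_\infty\,\|\phi(f(\cdot),\alpha)\,f(\cdot)^{-1}\|_{L^p(0,r+1)}.$$
   Context: Filtered linear regularization of the ill-conditioned linear system $A\boldsymbol x=\boldsymbol b$ arising from discretizing a convolution (averaging) operator; $\boldsymbol b^\delta$ is a perturbed right-hand side. $\|\cdot\|_p$ and $\|\cdot\|_\infty$ are vector norms; $\|\cdot\|_{L^p(0,r+1)}$ is the Lebesgue norm of a function of $t\in(0,r+1)$. *)

From Stdlib Require Import Reals Lra.
Open Scope R_scope.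

Fixpoint rsum (n : nat) (F : nat -> R) : R :=
  match n with
  | O => 0
  | S m => rsum m F + F m
  end.

Definition sum1 (r : nat) (F : nat -> R) : R := rsum r (fun k => F (S k)).

(* real power x^p for x >= 0, with the convention 0^p = 0 (p >= 1) *)
Definition rpow (x p : R) : R :=
  if Req_EM_T x 0 then 0 else Rpower x p.

(* vectors in R^n are functions nat -> R, indices 0..n-1 *)
Definition vnorm_p (n : nat) (p : R) (v : nat -> R) : R :=
  rpow (rsum n (fun i => rpow (Rabs (v i)) p)) (1 / p).

Fixpoint vnorm_inf (n : nat) (v : nat -> R) : R :=
  match n with
  | O => 0
  | S m => Rmax (vnorm_inf m v) (Rabs (v m))
  end.

Definition Lpnorm (g : R -> R) (p a b : R)
  (pr : Riemann_integrable (fun t => rpow (Rabs (g t)) p) a b) : R :=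
  rpow (RiemannInt pr) (1 / p).

(* Write x - x^{alpha,delta} in the right singular basis:
     x - x^{alpha,delta} = sum_j c_j xih_j,
     c_j = (b_j / sigma_j) (1 - phi(sigma_j)) + (b_j - b^delta_j) phi(sigma_j) / sigma_j.
   Three estimates bound every |c_j| by K = N' |x|_oo L1 + B |b - b^delta|_oo L2:
   - Orthonormality recovers a coefficient as an inner product, and entries of a
     unit vector are at most 1, so |b_j / sigma_j| <= N' |x|_oo and
     |b_j - b^delta_j| <= B |b - b^delta|_oo.
   - Since sigma_j = f(j) and |1 - phi(f t)|, |phi(f t)| / f t are nondecreasing,
     the value at t = j is dominated by the integral of its p-th power over
     [j, j+1], a subinterval of [0, r+1]; hence |1 - phi(sigma_j)| <= L1 and
     |phi(sigma_j) / sigma_j| <= L2, the two L^p norms of the statement.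
   Each entry of x - x^{alpha,delta} is then at most r K, and the p-norm of a
   vector of length N' is at most N' times its sup norm, which yields the
   theorem with C1 = N' r (N' + B). *)

From Stdlib Require Import Reals Lra Lia.
Open Scope R_scope.

Lemma rsum_ext n F G : (forall i, (i < n)%nat -> F i = G i) -> rsum n F = rsum n G.
Proof. induction n; simpl; intros H; auto. rewrite IHn, H; auto. Qed.

Lemma rsum_le n F G : (forall i, (i < n)%nat -> F i <= G i) -> rsum n F <= rsum n G.
Proof.
  induction n; simpl; intros H; [lra|].
  specialize (IHn (fun i Hi => H i ltac:(lia))). specialize (H n ltac:(lia)). lra.
Qed.

Lemma rsum_add n F G : rsum n (fun i => F i + G i) = rsum n F + rsum n G.
Proof. induction n; simpl; [lra|]. rewrite IHn; lra. Qed.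

Lemma rsum_sub n F G : rsum n F - rsum n G = rsum n (fun i => F i - G i).
Proof. induction n; simpl; [lra|]. rewrite <- IHn; lra. Qed.

Lemma rsum_scal n c F : rsum n (fun i => c * F i) = c * rsum n F.
Proof. induction n; simpl; [lra|]. rewrite IHn; lra. Qed.

Lemma rsum_mulr n c F : rsum n (fun i => F i * c) = rsum n F * c.
Proof. induction n; simpl; [lra|]. rewrite IHn; lra. Qed.

Lemma rsum_const n c : rsum n (fun _ => c) = INR n * c.
Proof. induction n; simpl rsum; [simpl; lra|]. rewrite IHn, S_INR; lra. Qed.

Lemma rsum_zero n F : (forall i, (i < n)%nat -> F i = 0) -> rsum n F = 0.
Proof. intros H. rewrite (rsum_ext n F (fun _ => 0)) by auto. rewrite rsum_const; ring. Qed.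

Lemma rsum_nonneg n F : (forall i, (i < n)%nat -> 0 <= F i) -> 0 <= rsum n F.
Proof. intros H. rewrite <- (rsum_zero n (fun _ => 0)) by auto. apply rsum_le; auto. Qed.

Lemma rsum_term n F j :
  (forall i, (i < n)%nat -> 0 <= F i) -> (j < n)%nat -> F j <= rsum n F.
Proof.
  induction n; intros H Hj; [lia|]. simpl.
  assert (Hrest : 0 <= rsum n F) by (apply rsum_nonneg; intros; apply H; lia).
  destruct (Nat.eq_dec j n) as [->|Hne]; [lra|].
  assert (F j <= rsum n F) by (apply IHn; [intros; apply H; lia | lia]).
  specialize (H n ltac:(lia)). lra.
Qed.

Lemma rsum_abs_bound n F M :
  (forall i, (i < n)%nat -> Rabs (F i) <= M) -> Rabs (rsum n F) <= INR n * M.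
Proof.
  induction n; intros H; simpl rsum.
  - rewrite Rabs_R0; simpl; lra.
  - rewrite S_INR. eapply Rle_trans; [apply Rabs_triang|].
    specialize (IHn (fun i Hi => H i ltac:(lia))). specialize (H n ltac:(lia)). lra.
Qed.

Lemma rsum_exch n m (F : nat -> nat -> R) :
  rsum n (fun i => rsum m (fun j => F i j)) = rsum m (fun j => rsum n (fun i => F i j)).
Proof.
  induction n; simpl.
  - rewrite rsum_zero; auto.
  - rewrite IHn, <- rsum_add. auto.
Qed.

Lemma sum1_delta r (a : nat -> R) j : (1 <= j <= r)%nat ->
  sum1 r (fun l => a l * (if Nat.eq_dec l j then 1 else 0)) = a j.
Proof.
  unfold sum1. induction r; intros Hj; [lia|].
  change (rsum (S r) ?F) with (rsum r F + F r).
  destruct (Nat.eq_dec (S r) j) as [<-|Hne].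
  - rewrite rsum_zero; [destruct (Nat.eq_dec (S r) (S r)); [ring | lia]|].
    intros i Hi. destruct (Nat.eq_dec (S i) (S r)); [lia|ring].
  - rewrite IHr by lia. destruct (Nat.eq_dec (S r) j); [lia | ring].
Qed.

Lemma rpow_nonneg x p : 0 <= rpow x p.
Proof. unfold rpow. destruct (Req_EM_T x 0); [lra|]. left; apply exp_pos. Qed.

Lemma rpow_nonzero x p : x <> 0 -> rpow x p = Rpower x p.
Proof. unfold rpow. destruct (Req_EM_T x 0); [contradiction|auto]. Qed.

Lemma rpow_mono a b p : 0 <= a <= b -> 0 <= p -> rpow a p <= rpow b p.
Proof.
  intros H Hp. destruct (Req_EM_T a 0) as [->|Ha].
  - unfold rpow at 1. destruct (Req_EM_T 0 0); [apply rpow_nonneg | lra].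
  - rewrite !rpow_nonzero by lra. apply Rle_Rpower_l; lra.
Qed.

Lemma rpow_inv c p : 0 < c -> 0 < p -> rpow (rpow c p) (1 / p) = c.
Proof.
  intros Hc Hp. rewrite (rpow_nonzero c) by lra.
  rewrite rpow_nonzero by (pose proof (exp_pos (p * ln c)); unfold Rpower; lra).
  rewrite Rpower_mult. replace (p * (1 / p)) with 1 by (field; lra).
  apply Rpower_1; auto.
Qed.

Lemma rpow_le_inv a S p : 0 <= a -> 0 < p -> rpow a p <= S -> a <= rpow S (1 / p).
Proof.
  intros Ha Hp H. destruct (Req_EM_T a 0) as [->|Hne]; [apply rpow_nonneg|].
  rewrite <- (rpow_inv a p) by lra. apply rpow_mono.
  - split; [apply rpow_nonneg | exact H].
  - apply Rlt_le, Rdiv_lt_0_compat; lra.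
Qed.

Lemma rpow_le_inv2 S c p :
  0 <= S -> 0 <= c -> 0 < p -> S <= rpow c p -> rpow S (1 / p) <= c.
Proof.
  intros HS Hc Hp H. destruct (Req_EM_T c 0) as [->|Hne].
  - unfold rpow in H at 1. destruct (Req_EM_T 0 0); [|lra].
    replace S with 0 by lra. unfold rpow. destruct (Req_EM_T 0 0); lra.
  - rewrite <- (rpow_inv c p) by lra. apply rpow_mono; [lra|].
    apply Rlt_le, Rdiv_lt_0_compat; lra.
Qed.

Lemma rpow_scal_ge n M p : 1 <= n -> 0 <= M -> 1 <= p -> n * rpow M p <= rpow (n * M) p.
Proof.
  intros Hn HM Hp. destruct (Req_EM_T M 0) as [->|Hne].
  - rewrite Rmult_0_r. unfold rpow. destruct (Req_EM_T 0 0); lra.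
  - rewrite !rpow_nonzero by nra. rewrite <- Rpower_mult_distr by lra.
    apply Rmult_le_compat_r; [left; apply exp_pos|].
    rewrite <- (Rpower_1 n) at 1 by lra. apply Rle_Rpower; lra.
Qed.

Lemma vnorm_inf_ge n v i : (i < n)%nat -> Rabs (v i) <= vnorm_inf n v.
Proof.
  induction n; intros H; [lia|]. simpl.
  destruct (Nat.eq_dec i n) as [->|Hne]; [apply Rmax_r|].
  eapply Rle_trans; [apply IHn; lia | apply Rmax_l].
Qed.

Lemma vnorm_inf_nonneg n v : 0 <= vnorm_inf n v.
Proof. induction n; simpl; [lra|]. eapply Rle_trans; [apply IHn | apply Rmax_l]. Qed.

Lemma vnorm_p_le_sup n p v M :
  1 <= p -> 0 <= M -> (forall i, (i < n)%nat -> Rabs (v i) <= M) ->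
  vnorm_p n p v <= INR n * M.
Proof.
  intros Hp HM Hv. unfold vnorm_p.
  assert (HnM : 0 <= INR n * M) by (apply Rmult_le_pos; [apply pos_INR | exact HM]).
  apply rpow_le_inv2; [apply rsum_nonneg; intros; apply rpow_nonneg | exact HnM | lra |].
  apply Rle_trans with (rsum n (fun _ => rpow M p)).
  - apply rsum_le. intros i Hi. apply rpow_mono; [split; [apply Rabs_pos | auto] | lra].
  - rewrite rsum_const. destruct n as [|n'].
    + simpl. rewrite Rmult_0_l. apply rpow_nonneg.
    + apply rpow_scal_ge; auto. rewrite S_INR; pose proof (pos_INR n'); lra.
Qed.

Definition orthonormal (N r : nat) (w : nat -> nat -> R) : Prop :=
  forall j k, (1 <= j <= r)%nat -> (1 <= k <= r)%nat ->
    rsum N (fun i => w j i * w k i) = if Nat.eq_dec j k then 1 else 0.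

Section Orthonormal.

Variables (N r : nat) (w : nat -> nat -> R).
Hypothesis Hon : orthonormal N r w.

Lemma coef_extract (c : nat -> R) j : (1 <= j <= r)%nat ->
  rsum N (fun k => sum1 r (fun l => c l * w l k) * w j k) = c j.
Proof.
  intros Hj. unfold sum1.
  rewrite (rsum_ext N _ (fun k => rsum r (fun l => c (S l) * (w (S l) k * w j k)))).
  2:{ intros i _. rewrite <- rsum_mulr. apply rsum_ext. intros; ring. }
  rewrite rsum_exch.
  rewrite (rsum_ext r _ (fun l => c (S l) * (if Nat.eq_dec (S l) j then 1 else 0))).
  - apply (sum1_delta r c j Hj).
  - intros i Hi. rewrite rsum_scal, Hon by lia. reflexivity.
Qed.

Lemma entry_le1 j k : (1 <= j <= r)%nat -> (k < N)%nat -> Rabs (w j k) <= 1.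
Proof.
  intros Hj Hk. pose proof (Hon j j Hj Hj) as Hnorm.
  destruct (Nat.eq_dec j j) as [_|]; [|lia].
  assert (w j k * w j k <= 1).
  { rewrite <- Hnorm. apply (rsum_term N (fun i => w j i * w j i)); auto.
    intros; nra. }
  unfold Rabs; destruct (Rcase_abs (w j k)); nra.
Qed.

Lemma coefficient_bound (v c : nat -> R) j :
  (1 <= j <= r)%nat -> (forall k, (k < N)%nat -> v k = sum1 r (fun l => c l * w l k)) ->
  Rabs (c j) <= INR N * vnorm_inf N v.
Proof.
  intros Hj Hv. rewrite <- (coef_extract c j Hj).
  rewrite (rsum_ext N _ (fun k => v k * w j k)) by (intros k Hk; rewrite Hv; auto).
  apply rsum_abs_bound. intros i Hi. rewrite Rabs_mult.
  pose proof (vnorm_inf_ge N v i Hi). pose proof (entry_le1 j i Hj Hi).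
  pose proof (Rabs_pos (v i)). pose proof (Rabs_pos (w j i)). nra.
Qed.

Lemma combination_entry_bound (c : nat -> R) K k :
  (forall j, (1 <= j <= r)%nat -> Rabs (c j) <= K) -> (k < N)%nat ->
  Rabs (sum1 r (fun j => c j * w j k)) <= INR r * K.
Proof.
  intros Hc Hk. apply rsum_abs_bound. intros i Hi. rewrite Rabs_mult.
  pose proof (Hc (S i) ltac:(lia)). pose proof (entry_le1 (S i) k ltac:(lia) Hk).
  pose proof (Rabs_pos (c (S i))). pose proof (Rabs_pos (w (S i) k)). nra.
Qed.

End Orthonormal.

Lemma value_le_integral g a b c (pr : Riemann_integrable g a b) :
  a <= c -> c + 1 <= b -> (forall t, a < t < b -> 0 <= g t) ->
  (forall t, c < t < b -> g c <= g t) -> 0 <= g c -> g c <= RiemannInt pr.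
Proof.
  intros Hac Hcb H0 Hm Hgc. assert (Hcb' : c <= b) by lra.
  pose proof (RiemannInt_P22 pr (conj Hac Hcb')) as prl.
  pose proof (RiemannInt_P23 pr (conj Hac Hcb')) as prr.
  rewrite <- (RiemannInt_P26 prl prr pr).
  assert (0 <= RiemannInt prl).
  { rewrite <- (Rmult_0_l (c - a)), <- (RiemannInt_P15 (RiemannInt_P14 a c 0)).
    apply RiemannInt_P19; auto. intros; unfold fct_cte; apply H0; lra. }
  assert (g c * (b - c) <= RiemannInt prr).
  { rewrite <- (RiemannInt_P15 (RiemannInt_P14 c b (g c))).
    apply RiemannInt_P19; [lra|]. intros; unfold fct_cte; apply Hm; lra. }
  nra.
Qed.

Lemma Lpnorm_ge_value g p a b s
  (pr : Riemann_integrable (fun t => rpow (Rabs (g t)) p) a b) :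
  0 < p -> a <= s -> s + 1 <= b ->
  (forall u v, a <= u -> u <= v -> v <= b -> Rabs (g u) <= Rabs (g v)) ->
  Rabs (g s) <= Lpnorm g p a b pr.
Proof.
  intros Hp Has Hsb Hmono. apply rpow_le_inv; [apply Rabs_pos | exact Hp |].
  apply (value_le_integral (fun t => rpow (Rabs (g t)) p)); try lra.
  - intros; apply rpow_nonneg.
  - intros t Ht. apply rpow_mono; [split; [apply Rabs_pos | apply Hmono; lra] | lra].
  - apply rpow_nonneg.
Qed.

Section FilterValues.

Variables (r : nat) (sigma : nat -> R) (f q : R -> R) (p : R).
Hypothesis Hp : 0 < p.
Hypothesis Hfs : forall j, (1 <= j <= r)%nat -> f (INR j) = sigma j.

Lemma unit_step_in_range j : (1 <= j <= r)%nat -> 0 <= INR j /\ INR j + 1 <= INR r + 1.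
Proof. intros Hj. split; [apply pos_INR | apply Rplus_le_compat_r, le_INR; lia]. Qed.

Lemma residual_filter_bound
  (pr : Riemann_integrable (fun t => rpow (Rabs (1 - q (f t))) p) 0 (INR r + 1)) j :
  (forall s t, 0 <= s -> s <= t -> t <= INR r + 1 ->
     Rabs (1 - q (f s)) <= Rabs (1 - q (f t))) ->
  (1 <= j <= r)%nat ->
  Rabs (1 - q (sigma j)) <= Lpnorm (fun t => 1 - q (f t)) p 0 (INR r + 1) pr.
Proof.
  intros Hmono Hj. destruct (unit_step_in_range j Hj). rewrite <- (Hfs j Hj).
  apply (Lpnorm_ge_value (fun t => 1 - q (f t))); try lra. exact Hmono.
Qed.

Lemma inverse_filter_bound
  (pr : Riemann_integrable (fun t => rpow (Rabs (q (f t) / f t)) p) 0 (INR r + 1)) j :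
  (forall t, 0 <= t -> 0 < f t) ->
  (forall s t, 0 <= s -> s <= t -> t <= INR r + 1 ->
     Rabs (q (f s)) / f s <= Rabs (q (f t)) / f t) ->
  (1 <= j <= r)%nat ->
  Rabs (q (sigma j) / sigma j) <= Lpnorm (fun t => q (f t) / f t) p 0 (INR r + 1) pr.
Proof.
  intros Hfpos Hmono Hj. destruct (unit_step_in_range j Hj). rewrite <- (Hfs j Hj).
  apply (Lpnorm_ge_value (fun t => q (f t) / f t)); try lra.
  intros u v Hu Huv Hv. pose proof (Hfpos u Hu). pose proof (Hfpos v ltac:(lra)).
  cbv beta. unfold Rdiv. rewrite !Rabs_mult, !Rabs_inv, !(Rabs_pos_eq (f _)) by lra.
  apply Hmono; lra.
Qed.

End FilterValues.

Lemma error_expansion r (sigma q bc bdc : nat -> R) (w : nat -> nat -> R) k :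
  (forall j, (1 <= j <= r)%nat -> 0 < sigma j) ->
  sum1 r (fun j => bc j / sigma j * w j k) - sum1 r (fun j => bdc j * (q j / sigma j) * w j k)
  = sum1 r (fun j => (bc j / sigma j * (1 - q j) + (bc j - bdc j) * (q j / sigma j)) * w j k).
Proof.
  intros Hsig. unfold sum1. rewrite rsum_sub. apply rsum_ext. intros i Hi.
  assert (0 < sigma (S i)) by (apply Hsig; lia). field. lra.
Qed.

Lemma error_coefficient_bound a e q s M1 M2 L1 L2 :
  Rabs a <= M1 -> Rabs e <= M2 -> Rabs (1 - q) <= L1 -> Rabs (q / s) <= L2 ->
  Rabs (a * (1 - q) + e * (q / s)) <= M1 * L1 + M2 * L2.
Proof.
  intros Ha He Hq Hqs. eapply Rle_trans; [apply Rabs_triang|]. rewrite !Rabs_mult.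
  pose proof (Rabs_pos a). pose proof (Rabs_pos e).
  pose proof (Rabs_pos (1 - q)). pose proof (Rabs_pos (q / s)).
  apply Rplus_le_compat; apply Rmult_le_compat; auto; lra.
Qed.

Lemma constant_absorption n r m X D L1 L2 :
  0 <= n -> 0 <= r -> 0 <= m -> 0 <= X -> 0 <= D -> 0 <= L1 -> 0 <= L2 ->
  n * (r * (n * X * L1 + m * D * L2))
  <= n * r * (n + m) * X * L1 + n * r * (n + m) * D * L2.
Proof.
  intros Hn Hr Hm HX HD HL1 HL2.
  assert (0 <= n * r * m * X * L1) by (repeat apply Rmult_le_pos; auto).
  assert (0 <= n * r * n * D * L2) by (repeat apply Rmult_le_pos; auto).
  nra.
Qed.

Theorem mainTheorem2
  (B N' : nat) (A : nat -> nat -> R) (r : nat)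
  (sigma : nat -> R) (xi xih : nat -> nat -> R)
  (* r >= 1 ; indices j range over 1..r *)
  (Hr : (1 <= r)%nat)
  (Hsig_pos : forall j, (1 <= j <= r)%nat -> 0 < sigma j <= 1)
  (Hsig_dec : forall j k, (1 <= j)%nat -> (j <= k)%nat -> (k <= r)%nat ->
                sigma k <= sigma j)
  (* orthonormal left singular vectors xi j in R^B *)
  (Hxi_on : forall j k, (1 <= j <= r)%nat -> (1 <= k <= r)%nat ->
     rsum B (fun i => xi j i * xi k i) = if Nat.eq_dec j k then 1 else 0)
  (* orthonormal right singular vectors xih j in R^N' *)
  (Hxih_on : forall j k, (1 <= j <= r)%nat -> (1 <= k <= r)%nat ->
     rsum N' (fun i => xih j i * xih k i) = if Nat.eq_dec j k then 1 else 0)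
  (* A (B x N') has rank r with this singular value decomposition *)
  (HA : forall i k, (i < B)%nat -> (k < N')%nat ->
     A i k = sum1 r (fun j => sigma j * xi j i * xih j k))
  (HAxi : forall j i, (1 <= j <= r)%nat -> (i < B)%nat ->
     rsum N' (fun k => A i k * xih j k) = sigma j * xi j i)
  (HATxi : forall j k, (1 <= j <= r)%nat -> (k < N')%nat ->
     rsum B (fun i => A i k * xi j i) = sigma j * xih j k) :
  forall p : R, 1 <= p ->
  exists C1 : R,
  forall (alpha : R) (phi : R -> R -> R) (bc bdc : nat -> R) (f : R -> R),
    0 < alpha ->
    (* f : [0,oo) -> (0,1] continuous, strictly decreasing *)
    (forall t, 0 <= t -> 0 < f t <= 1) ->
    (forall t, 0 <= t -> forall eps, 0 < eps -> exists delta, 0 < delta /\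
        forall s, 0 <= s -> Rabs (s - t) < delta -> Rabs (f s - f t) < eps) ->
    (forall s t, 0 <= s -> s < t -> f t < f s) ->
    f 0 = 1 ->
    (forall j, (1 <= j <= r)%nat -> f (INR j) = sigma j) ->
    (forall eps, 0 < eps -> exists T, forall t, T <= t -> Rabs (f t) < eps) ->
    (* monotonicity of the filter-derived functions on [0, r+1] *)
    (forall s t, 0 <= s -> s <= t -> t <= INR r + 1 ->
       Rabs (1 - phi (f s) alpha) <= Rabs (1 - phi (f t) alpha)) ->
    (forall s t, 0 <= s -> s <= t -> t <= INR r + 1 ->
       Rabs (phi (f s) alpha) / f s <= Rabs (phi (f t) alpha) / f t) ->
    let b := fun i => sum1 r (fun j => bc j * xi j i) in
    let bd := fun i => sum1 r (fun j => bdc j * xi j i) in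
    let x := fun k => sum1 r (fun j => bc j / sigma j * xih j k) in
    let xad := fun k =>
      sum1 r (fun j => bdc j * (phi (sigma j) alpha / sigma j) * xih j k) in
    forall (pr1 : Riemann_integrable
                    (fun t => rpow (Rabs (1 - phi (f t) alpha)) p) 0 (INR r + 1))
           (pr2 : Riemann_integrable
                    (fun t => rpow (Rabs (phi (f t) alpha / f t)) p) 0 (INR r + 1)),
    vnorm_p N' p (fun k => x k - xad k)
      <= C1 * vnorm_inf N' x
            * Lpnorm (fun t => 1 - phi (f t) alpha) p 0 (INR r + 1) pr1
         + C1 * vnorm_inf B (fun i => b i - bd i)
            * Lpnorm (fun t => phi (f t) alpha / f t) p 0 (INR r + 1) pr2.
Proof.
  intros p Hp. exists (INR N' * INR r * (INR N' + INR B)).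
  intros alpha phi bc bdc f _ Hf _ _ _ Hfs _ Hm1 Hm2 b bd x xad pr1 pr2.
  set (X := vnorm_inf N' x). set (D := vnorm_inf B (fun i => b i - bd i)).
  set (L1 := Lpnorm _ p 0 (INR r + 1) pr1). set (L2 := Lpnorm _ p 0 (INR r + 1) pr2).
  assert (Hsig : forall j, (1 <= j <= r)%nat -> 0 < sigma j) by (intros j Hj; apply Hsig_pos, Hj).
  assert (Hx : forall j, (1 <= j <= r)%nat -> Rabs (bc j / sigma j) <= INR N' * X).
  { intros j Hj. apply (coefficient_bound N' r xih Hxih_on x (fun l => bc l / sigma l)); auto. }
  assert (Hres : forall j, (1 <= j <= r)%nat -> Rabs (bc j - bdc j) <= INR B * D).
  { intros j Hj. apply (coefficient_bound B r xi Hxi_on (fun i => b i - bd i) (fun l => bc l - bdc l));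
      auto.
    intros k _. unfold b, bd, sum1. rewrite rsum_sub. apply rsum_ext; intros; ring. }
  assert (Hfilt1 : forall j, (1 <= j <= r)%nat -> Rabs (1 - phi (sigma j) alpha) <= L1).
  { intros j Hj. exact (residual_filter_bound r sigma f (fun s => phi s alpha) p
                          ltac:(lra) Hfs pr1 j Hm1 Hj). }
  assert (Hfilt2 : forall j, (1 <= j <= r)%nat ->
            Rabs (phi (sigma j) alpha / sigma j) <= L2).
  { intros j Hj. exact (inverse_filter_bound r sigma f (fun s => phi s alpha) p
                          ltac:(lra) Hfs pr2 j (fun t Ht => proj1 (Hf t Ht)) Hm2 Hj). }
  assert (HX : 0 <= X) by apply vnorm_inf_nonneg.
  assert (HD : 0 <= D) by apply vnorm_inf_nonneg.
  assert (HL1 : 0 <= L1) by apply rpow_nonneg.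
  assert (HL2 : 0 <= L2) by apply rpow_nonneg.
  pose proof (pos_INR N'). pose proof (pos_INR B). pose proof (pos_INR r).
  (* Every entry of the error is at most r K, with K the coefficient bound. *)
  apply Rle_trans with (INR N' * (INR r * (INR N' * X * L1 + INR B * D * L2))).
  - apply vnorm_p_le_sup; auto.
    + apply Rmult_le_pos, Rplus_le_le_0_compat; repeat apply Rmult_le_pos; auto.
    + intros k Hk. unfold x, xad. rewrite error_expansion by auto.
      apply (combination_entry_bound N' r xih Hxih_on); auto.
      intros j Hj. apply error_coefficient_bound; auto.
  - apply constant_absorption; auto.
Qed.
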